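(* Let $\kappa$ be an infinite cardinal. If a graph $G$ is $\kappa$-connected, then $G$ contains a subdivision of $K_\kappa$.
   Context: A graph is a pair $(V,E)$ with $E\subseteq[V]^2$. A graph is $\kappa$-connected if it stays connected after removing any set of fewer than $\kappa$ vertices. $K_\kappa$ is the complete graph on $\kappa$ vertices. A graph $H$ is a subdivision of $K$ if $H$ is obtained from $K$ by replacing edges with paths (internally disjoint paths whose interior vertices are new); $G$ contains a subdivision of $K_\kappa$ if some subgraph of $G$ is such a subdivision. *)

(* graphs on an arbitrary (possibly infinite) vertex type,
   cardinals represented by types, cardinal comparison by injections. *)
From Stdlib Require Import List.
Import ListNotations.

Record graph := Graph {
  vert :> Type;
  adj : vert -> vert -> Prop;
  adj_sym : forall x y, adj x y -> adj y x;
  adj_irrefl : forall x, ~ adj x x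
}.

Definition injective {A B : Type} (f : A -> B) : Prop :=
  forall x y, f x = f y -> x = y.

Definition card_le (A B : Type) : Prop := exists f : A -> B, injective f.
Definition card_lt (A B : Type) : Prop := card_le A B /\ ~ card_le B A.

Definition infinite_card (K : Type) : Prop := card_le nat K.

Fixpoint walk {V : Type} (e : V -> V -> Prop) (l : list V) : Prop :=
  match l with
  | x :: ((y :: _) as t) => e x y /\ walk e t
  | _ => True
  end.

Definition is_path {V : Type} (e : V -> V -> Prop) (l : list V) (x y : V) : Prop :=
  (exists t, l = x :: t) /\ last l x = y /\ walk e l /\ NoDup l.

Definition interior {V : Type} (l : list V) : list V := removelast (tl l).

Definition connected_minus (G : graph) (S : G -> Prop) : Prop :=
  (exists v : G, ~ S v) /\
  forall u v : G, ~ S u -> ~ S v ->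
    exists l, is_path (adj G) l u v /\ forall w, In w l -> ~ S w.

Definition k_connected (G : graph) (K : Type) : Prop :=
  forall S : G -> Prop, card_lt {x : G | S x} K -> connected_minus G S.

Definition has_TK (G : graph) (K : Type) : Prop :=
  exists (b : K -> G) (P : K -> K -> list G),
    injective b /\
    (forall i j, i <> j ->
       is_path (adj G) (P i j) (b i) (b j) /\
       forall k, ~ In (b k) (interior (P i j))) /\
    (forall i j k l, i <> j -> k <> l ->
       ~ ((i = k /\ j = l) \/ (i = l /\ j = k)) ->
       forall x, In x (interior (P i j)) -> ~ In x (interior (P k l))).

From Stdlib Require Import Bool List Classical ClassicalEpsilon ProofIrrelevance FunctionalExtensionality PropExtensionality PeanoNat Cantor Lia.
From mathcomp Require classical_sets.
Import ListNotations.

(* Take, by Zorn's lemma, a maximal partial subdivision of K_kappa: branch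
   vertices for a set A of indices and, between any two of them, paths that
   avoid the other branch vertices and are internally disjoint.  If |A| < kappa,
   the set U of vertices in use is a union of |A * A| finite sets, hence
   |U| < kappa by Hessenberg's theorem |A * A| = |A| for infinite A.  Since G is
   kappa-connected, G - U contains a vertex v, and a second maximality argument,
   which only ever deletes fewer than kappa vertices, gives a fan of internally
   disjoint paths from v to all branch vertices with interiors outside U.  Adding
   v as the branch vertex of a new index contradicts maximality; so |A| >= kappa,
   and kappa of the indices span a subdivision of K_kappa. *)

(** * Zorn's lemma *)

Section Zorn.
Context {T : Type}.

Definition included (X Y : T -> Prop) : Prop := forall a, X a -> Y a.

Definition is_chain (F : (T -> Prop) -> Prop) : Prop :=
  forall X Y, F X -> F Y -> included X Y \/ included Y X.

Definition chain_union (F : (T -> Prop) -> Prop) : T -> Prop :=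
  fun a => exists X, F X /\ X a.

Definition chain_closed (P : (T -> Prop) -> Prop) : Prop :=
  forall F, is_chain F -> (forall X, F X -> P X) -> P (chain_union F).

Definition maximal (P : (T -> Prop) -> Prop) (M : T -> Prop) : Prop :=
  P M /\ forall N, included M N -> P N -> included N M.

Lemma zorn (P : (T -> Prop) -> Prop) : chain_closed P -> exists M, maximal P M.
Proof.
  intros HP.
  destruct (@classical_sets.Zorn_bigcup T P) as [M [PM HM]].
  - intros F FP Ftot.
    replace (classical_sets.bigcup F (fun X => X)) with (chain_union F).
    + apply HP; [exact Ftot | exact FP].
    + apply functional_extensionality; intro a.
      apply propositional_extensionality; split.
      * intros [X [FX Xa]]; exists X; assumption.
      * intros [X FX Xa]; exists X; split; assumption.
  - exists M; split; [exact PM |].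
    intros N MN PN a Na.
    apply NNPP; intro nMa.
    apply (HM N); [split; [exact MN |] | exact PN].
    intro NM; exact (nMa (NM a Na)).
Qed.

Lemma chain_union_common F a b :
  is_chain F -> chain_union F a -> chain_union F b -> exists X, F X /\ X a /\ X b.
Proof.
  intros Fch [X [FX Xa]] [Y [FY Yb]].
  destruct (Fch X Y FX FY) as [XY | YX]; [exists Y | exists X]; auto.
Qed.

Lemma maximal_union P M N : maximal P M -> P (fun a => M a \/ N a) -> included N M.
Proof.
  intros [_ HM] PMN a Na.
  apply (HM _ (fun b Mb => or_introl Mb) PMN); right; exact Na.
Qed.

End Zorn.

(** * Comparability of cardinals and Hessenberg's theorem *)

Lemma partial_choice {A B : Type} (R : A -> B -> Prop) :
  inhabited B -> exists f : A -> B, forall a b, R a b -> R a (f a).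
Proof.
  intros [b0].
  destruct (choice (fun a b => (exists b', R a b') -> R a b)) as [f Hf].
  - intro a; destruct (classic (exists b, R a b)) as [[b Hb] | Hn].
    + exists b; intros _; exact Hb.
    + exists b0; intro H; contradiction.
  - exists f; intros a b Hab; apply Hf; exists b; exact Hab.
Qed.

Lemma partial_fun_choice {A B : Type} (R : A -> B -> Prop) :
  inhabited B -> (forall a b b', R a b -> R a b' -> b = b') ->
  exists f : A -> B, forall a b, R a b -> f a = b.
Proof.
  intros HB Rfun; destruct (partial_choice R HB) as [f Hf].
  exists f; intros a b Hab; exact (Rfun a _ _ (Hf a b Hab) Hab).
Qed.

Lemma sig_eq {A : Type} {P : A -> Prop} (u v : {a | P a}) : proj1_sig u = proj1_sig v -> u = v.
Proof. apply eq_sig_hprop; intros; apply proof_irrelevance. Qed.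

Definition partial_bij {A B : Type} (p q : A * B) : Prop := fst p = fst q <-> snd p = snd q.

Lemma partial_bij_sym {A B : Type} (p q : A * B) : partial_bij p q -> partial_bij q p.
Proof. unfold partial_bij; intros H; split; intro E; symmetry; apply H; symmetry; exact E. Qed.

Definition injective_on {A B : Type} (P : A -> Prop) (f : A -> B) : Prop :=
  forall x y, P x -> P y -> f x = f y -> x = y.

Lemma card_le_of_partial_bij {Y Z : Type} (M : Y * Z -> Prop) :
  (forall p q, M p -> M q -> partial_bij p q) -> (forall y, exists z, M (y, z)) -> card_le Y Z.
Proof.
  intros Mbij Mtot.
  destruct (choice (fun y z => M (y, z)) Mtot) as [f Hf].
  exists f; intros y y' E.
  exact (proj2 (Mbij (y, f y) (y', f y') (Hf y) (Hf y')) E).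
Qed.

Lemma card_le_total (Y Z : Type) : card_le Y Z \/ card_le Z Y.
Proof.
  set (P := fun M : Y * Z -> Prop => forall p q, M p -> M q -> partial_bij p q).
  destruct (zorn P) as [M M_max].
  { intros F Fch FP p q Hp Hq.
    destruct (chain_union_common F p q Fch Hp Hq) as [X [FX [Xp Xq]]].
    exact (FP X FX p q Xp Xq). }
  assert (Mbij := proj1 M_max).
  destruct (classic (forall y, exists z, M (y, z))) as [Ytot | [y0 Hy0] %not_all_ex_not].
  { left; exact (card_le_of_partial_bij M Mbij Ytot). }
  destruct (classic (forall z, exists y, M (y, z))) as [Ztot | [z0 Hz0] %not_all_ex_not].
  { right; apply (card_le_of_partial_bij (fun p => M (snd p, fst p))); [| exact Ztot].
    intros [z y] [z' y'] Hp Hq; unfold partial_bij in *; simpl in *.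
    specialize (Mbij _ _ Hp Hq); simpl in Mbij; tauto. }
  exfalso; apply Hy0; exists z0.
  apply (maximal_union P M (fun p => p = (y0, z0)) M_max); [| reflexivity].
  assert (Hnew : forall p, M p -> partial_bij p (y0, z0)).
  { intros [y z] Hp; unfold partial_bij; simpl; split; intros <-; exfalso; eauto. }
  intros p q [Hp | ->] [Hq | ->]; auto.
  - apply partial_bij_sym; auto.
  - unfold partial_bij; tauto.
Qed.

Lemma card_lt_of_not_ge (X K : Type) : ~ card_le K X -> card_lt X K.
Proof. intro H; split; [destruct (card_le_total X K) |]; tauto. Qed.

Lemma card_le_trans (X Y Z : Type) : card_le X Y -> card_le Y Z -> card_le X Z.
Proof.
  intros [f Hf] [g Hg]; exists (fun x => g (f x)).
  intros x y E; apply Hf, Hg, E.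
Qed.

Lemma card_le_prod (X X' Y Y' : Type) :
  card_le X X' -> card_le Y Y' -> card_le (X * Y) (X' * Y').
Proof.
  intros [f Hf] [g Hg]; exists (fun p => (f (fst p), g (snd p))).
  intros [x y] [x' y'] E; injection E as Ex Ey; simpl in *.
  rewrite (Hf _ _ Ex), (Hg _ _ Ey); reflexivity.
Qed.

Lemma card_le_into_sig {V W : Type} (P : W -> Prop) (f : V -> W) :
  injective f -> (forall x, P (f x)) -> card_le V {y | P y}.
Proof.
  intros Hf HP; exists (fun x => exist P (f x) (HP x)).
  intros x y E; apply Hf; exact (f_equal (@proj1_sig _ _) E).
Qed.

Lemma injective_on_of_card_le {V W : Type} (P : V -> Prop) (Q : W -> Prop) (w0 : W) :
  card_le {x | P x} {y | Q y} ->
  exists h : V -> W, injective_on P h /\ forall x, P x -> Q (h x).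
Proof.
  intros [j Hj].
  exists (fun x => match excluded_middle_informative (P x) with
           | left Px => proj1_sig (j (exist P x Px))
           | right _ => w0 end).
  split.
  - intros x y Px Py.
    destruct (excluded_middle_informative (P x)) as [px |]; [| contradiction].
    destruct (excluded_middle_informative (P y)) as [py |]; [| contradiction].
    intro E; exact (f_equal (@proj1_sig _ _) (Hj _ _ (sig_eq _ _ E))).
  - intros x Px.
    destruct (excluded_middle_informative (P x)) as [px |]; [| contradiction].
    exact (proj2_sig (j (exist P x px))).
Qed.

Section Hessenberg.
Variables (X : Type) (e : nat -> X).
Hypothesis e_inj : injective e.

(* An entry [((x, y), z)] pairs [x] and [y] to [z]; a pairing table is thus an
   injection [B * B -> B], where [B] is the set of values occurring in it. *)
Definition in_table (M : (X * X) * X -> Prop) (x : X) : Prop :=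
  exists y1 y2 z, M ((y1, y2), z) /\ (x = y1 \/ x = y2 \/ x = z).

Record pairing_table (M : (X * X) * X -> Prop) : Prop := {
  table_bij : forall p q, M p -> M q -> partial_bij p q;
  table_total : forall x y, in_table M x -> in_table M y -> exists z, M ((x, y), z);
  table_base : (exists p, M p) -> forall n, in_table M (e n) }.

Lemma in_table_included M N x : included M N -> in_table M x -> in_table N x.
Proof. intros MN [y1 [y2 [z [Hp Hx]]]]; exists y1, y2, z; auto. Qed.

Lemma in_table_chain_union F x y :
  is_chain F -> in_table (chain_union F) x -> in_table (chain_union F) y ->
  exists M, F M /\ in_table M x /\ in_table M y.
Proof.
  intros Fch [x1 [x2 [z [Hp Hx]]]] [y1 [y2 [z' [Hq Hy]]]].
  destruct (chain_union_common F _ _ Fch Hp Hq) as [M [FM [Mp Mq]]].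
  exists M; split; [exact FM | split]; [exists x1, x2, z | exists y1, y2, z']; auto.
Qed.

Lemma pairing_table_chain_closed : chain_closed pairing_table.
Proof.
  intros F Fch FP; split.
  - intros p q Hp Hq.
    destruct (chain_union_common F p q Fch Hp Hq) as [M [FM [Mp Mq]]].
    exact (table_bij _ (FP M FM) p q Mp Mq).
  - intros x y Hx Hy.
    destruct (in_table_chain_union F x y Fch Hx Hy) as [M [FM [Mx My]]].
    destruct (table_total _ (FP M FM) x y Mx My) as [z Hz].
    exists z, M; auto.
  - intros [p [M [FM Mp]]] n.
    apply (in_table_included M); [intros q Mq; exists M; auto |].
    exact (table_base _ (FP M FM) (ex_intro _ p Mp) n).
Qed.

Definition cantor_table (p : (X * X) * X) : Prop :=
  exists m n, p = ((e m, e n), e (Cantor.to_nat (m, n))).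

Lemma in_cantor_table x : in_table cantor_table x -> exists n, x = e n.
Proof.
  intros [y1 [y2 [z [[m [n E]] Hx]]]]; injection E as -> -> ->.
  destruct Hx as [-> | [-> | ->]]; eauto.
Qed.

Lemma cantor_table_pairing : pairing_table cantor_table.
Proof.
  split.
  - intros p q [m [n ->]] [m' [n' ->]]; unfold partial_bij; simpl; split.
    + intro E; injection E as Em En.
      rewrite (e_inj _ _ Em), (e_inj _ _ En); reflexivity.
    + intro E.
      assert (Emn : Cantor.of_nat (Cantor.to_nat (m, n)) = Cantor.of_nat (Cantor.to_nat (m', n')))
        by (f_equal; exact (e_inj _ _ E)).
      rewrite !Cantor.cancel_of_to in Emn; injection Emn as -> ->; reflexivity.
  - intros x y Hx Hy.
    destruct (in_cantor_table x Hx) as [m ->], (in_cantor_table y Hy) as [n ->].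
    exists (e (Cantor.to_nat (m, n))), m, n; reflexivity.
  - intros _ n; exists (e n), (e n), (e (Cantor.to_nat (n, n))); split; [exists n, n |]; auto.
Qed.

Section Maximal.
Variable M : (X * X) * X -> Prop.
Hypothesis M_max : maximal pairing_table M.

Lemma maximal_table_base n : in_table M (e n).
Proof.
  apply (table_base _ (proj1 M_max)).
  apply NNPP; intro Mempty.
  apply Mempty; exists ((e 0, e 0), e (Cantor.to_nat (0, 0))).
  apply (proj2 M_max cantor_table); [| exact cantor_table_pairing | exists 0, 0; reflexivity].
  intros p Mp; exfalso; eauto.
Qed.

Variable f : X -> X -> X.
Hypothesis f_spec : forall x y, in_table M x -> in_table M y -> M ((x, y), f x y).

Lemma pair_in_table x y : in_table M x -> in_table M y -> in_table M (f x y).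
Proof. intros Hx Hy; exists x, y, (f x y); auto. Qed.

Lemma pair_inj x y x' y' :
  in_table M x -> in_table M y -> in_table M x' -> in_table M y' ->
  f x y = f x' y' -> x = x' /\ y = y'.
Proof.
  intros Hx Hy Hx' Hy' E.
  assert (Bij := table_bij _ (proj1 M_max) _ _ (f_spec x y Hx Hy) (f_spec x' y' Hx' Hy')).
  apply Bij in E; injection E; auto.
Qed.

Section Escape.
Variable h : X -> X.
Hypothesis h_inj : injective_on (in_table M) h.
Hypothesis h_out : forall x, in_table M x -> ~ in_table M (h x).

(* [M] extends to the support [B + h(B)], identified with [B * bool] by [lift]:
   a new pair [(lift s x, lift t y)], with [(s, t) <> (false, false)], is sent
   to [h (f (f x y) (code s t))]. *)
Definition lift (s : bool) (x : X) : X := if s then h x else x.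

Definition code (s t : bool) : X := e (Nat.b2n s + 2 * Nat.b2n t).

Definition escape_entry (p : (X * X) * X) : Prop :=
  exists x y s t, in_table M x /\ in_table M y /\ s || t = true /\
    p = ((lift s x, lift t y), h (f (f x y) (code s t))).

Lemma lift_inj s s' x x' :
  in_table M x -> in_table M x' -> lift s x = lift s' x' -> s = s' /\ x = x'.
Proof.
  intros Hx Hx'; destruct s, s'; simpl; intro E.
  - split; [reflexivity | exact (h_inj _ _ Hx Hx' E)].
  - exfalso; rewrite <- E in Hx'; exact (h_out x Hx Hx').
  - exfalso; rewrite E in Hx; exact (h_out x' Hx' Hx).
  - auto.
Qed.

Lemma code_inj s t s' t' : code s t = code s' t' -> s = s' /\ t = t'.
Proof. intro E; apply e_inj in E; destruct s, t, s', t'; simpl in E; auto; lia. Qed.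

Lemma escape_entry_out x1 x2 z :
  escape_entry ((x1, x2), z) -> ~ (in_table M x1 /\ in_table M x2) /\ ~ in_table M z.
Proof.
  intros [x [y [s [t [Hx [Hy [Hst E]]]]]]]; injection E as -> -> ->.
  split.
  - intros [H1 H2].
    destruct s; [exact (h_out x Hx H1) |].
    destruct t; [exact (h_out y Hy H2) | discriminate].
  - apply h_out, pair_in_table; [apply pair_in_table; auto | apply maximal_table_base].
Qed.

Lemma escape_entry_bij p q : escape_entry p -> escape_entry q -> partial_bij p q.
Proof.
  intros [x [y [s [t [Hx [Hy [_ ->]]]]]]] [x' [y' [s' [t' [Hx' [Hy' [_ ->]]]]]]].
  unfold partial_bij; simpl; split; intro E.
  - injection E as E1 E2.
    destruct (lift_inj _ _ _ _ Hx Hx' E1) as [-> ->].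
    destruct (lift_inj _ _ _ _ Hy Hy' E2) as [-> ->]; reflexivity.
  - assert (Hc : forall s t, in_table M (code s t)) by (intros; apply maximal_table_base).
    apply h_inj in E; [| apply pair_in_table; auto using pair_in_table ..].
    apply pair_inj in E as [E Ec]; auto using pair_in_table.
    apply pair_inj in E as [-> ->]; auto.
    destruct (code_inj _ _ _ _ Ec) as [-> ->]; reflexivity.
Qed.

Lemma in_escape_table u :
  in_table (fun p => M p \/ escape_entry p) u -> exists s x, in_table M x /\ u = lift s x.
Proof.
  intros [y1 [y2 [z [[Mp | [x [y [s [t [Hx [Hy [_ E]]]]]]]] Hu]]]].
  - exists false, u; split; [exists y1, y2, z; auto | reflexivity].
  - injection E as -> -> ->.
    destruct Hu as [-> | [-> | ->]]; [eauto | eauto |].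
    exists true, (f (f x y) (code s t)); split; [| reflexivity].
    apply pair_in_table; [apply pair_in_table; auto | apply maximal_table_base].
Qed.

Lemma escape_pairing_table : pairing_table (fun p => M p \/ escape_entry p).
Proof.
  split.
  - assert (Hmix : forall p q, M p -> escape_entry q -> partial_bij p q).
    { intros [[x1 x2] z] [[u1 u2] w] Mp Eq.
      destruct (escape_entry_out _ _ _ Eq) as [Hu Hw].
      unfold partial_bij; simpl; split; intro E; exfalso.
      - injection E as -> ->; apply Hu; split; [exists u1, u2, z | exists u1, u2, z]; auto.
      - subst w; apply Hw; exists x1, x2, z; auto. }
    intros p q [Mp | Ep] [Mq | Eq].
    + exact (table_bij _ (proj1 M_max) p q Mp Mq).
    + exact (Hmix p q Mp Eq).
    + exact (partial_bij_sym _ _ (Hmix q p Mq Ep)).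
    + exact (escape_entry_bij p q Ep Eq).
  - intros u w Hu Hw.
    destruct (in_escape_table u Hu) as [s [x [Hx ->]]].
    destruct (in_escape_table w Hw) as [t [y [Hy ->]]].
    destruct (s || t) eqn:Hst.
    + eexists; right; exists x, y, s, t; auto.
    + apply orb_false_iff in Hst as [-> ->].
      exists (f x y); left; apply f_spec; auto.
  - intros _ n; apply (in_table_included M); [intros p Mp; left; exact Mp |].
    apply maximal_table_base.
Qed.

End Escape.

Lemma no_escape :
  ~ exists h, injective_on (in_table M) h /\ forall x, in_table M x -> ~ in_table M (h x).
Proof.
  intros [h [h_inj h_out]].
  assert (Esc := maximal_union _ _ _ M_max (escape_pairing_table h h_inj h_out)).
  assert (Hb := maximal_table_base 0).
  apply (h_out (e 0) Hb).
  exists (h (e 0)), (h (e 0)), (h (f (f (e 0) (e 0)) (code true true))); split; [| auto].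
  apply Esc; exists (e 0), (e 0), true, true; auto.
Qed.

(* [X \ B] embeds into [B] by comparability, as [no_escape] excludes the
   converse; so [X] embeds into [B * {e 0, e 1}], which [f] maps into [B]. *)
Lemma card_le_table : card_le X {x | in_table M x}.
Proof.
  destruct (card_le_total {x | in_table M x} {x | ~ in_table M x}) as [Hout | Hin].
  { exfalso; apply no_escape; exact (injective_on_of_card_le _ _ (e 0) Hout). }
  destruct (injective_on_of_card_le _ _ (e 0) Hin) as [g [g_inj g_in]].
  assert (He : forall n, in_table M (e n)) by exact maximal_table_base.
  apply (card_le_into_sig _ (fun x => match excluded_middle_informative (in_table M x) with
                                      | left _ => f x (e 0)
                                      | right _ => f (g x) (e 1) end)).
  - intros x y.
    destruct (excluded_middle_informative (in_table M x)) as [Bx | Bx],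
             (excluded_middle_informative (in_table M y)) as [By | By];
      intro E; apply pair_inj in E as [E En]; auto; apply e_inj in En; discriminate.
  - intro x; destruct (excluded_middle_informative (in_table M x)); apply pair_in_table; auto.
Qed.

End Maximal.

Lemma card_square_le_of_nat : card_le (X * X) X.
Proof.
  destruct (zorn pairing_table pairing_table_chain_closed) as [M M_max].
  destruct (partial_choice (fun p z => M (p, z)) (inhabits (e 0))) as [F HF].
  assert (f_spec : forall x y, in_table M x -> in_table M y -> M ((x, y), F (x, y))).
  { intros x y Hx Hy.
    destruct (table_total _ (proj1 M_max) x y Hx Hy) as [z Hz]; exact (HF _ _ Hz). }
  set (f := fun x y => F (x, y)) in f_spec.
  apply (card_le_trans _ ({x | in_table M x} * {x | in_table M x})).
  { apply card_le_prod; exact (card_le_table M M_max f f_spec). }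
  exists (fun p => f (proj1_sig (fst p)) (proj1_sig (snd p))).
  intros [[x Hx] [y Hy]] [[x' Hx'] [y' Hy']] E; simpl in E.
  destruct (pair_inj M M_max f f_spec _ _ _ _ Hx Hy Hx' Hy' E) as [-> ->].
  f_equal; apply sig_eq; reflexivity.
Qed.

End Hessenberg.

Lemma card_square_le (X : Type) : infinite_card X -> card_le (X * X) X.
Proof. intros [e e_inj]; exact (card_square_le_of_nat X e e_inj). Qed.

(** * Sets smaller than an infinite cardinal *)

Definition finite_set {V : Type} (P : V -> Prop) : Prop := exists l, forall x, P x -> In x l.

Lemma finite_set_not_infinite {V : Type} (P : V -> Prop) : finite_set P -> ~ card_le nat {x | P x}.
Proof.
  intros [l Hl] [g g_inj].
  assert (Hnd : NoDup (map (fun n => proj1_sig (g n)) (seq 0 (S (length l))))).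
  { apply NoDup_map_NoDup_ForallPairs; [| apply seq_NoDup].
    intros m n _ _ E; exact (g_inj _ _ (sig_eq _ _ E)). }
  apply NoDup_incl_length with (l' := l) in Hnd.
  - rewrite length_map, length_seq in Hnd; lia.
  - intros x Hx; apply in_map_iff in Hx as [n [<- _]]; apply Hl, proj2_sig.
Qed.

Fixpoint picks {V : Type} (pick : list V -> V) (n : nat) : list V :=
  match n with 0 => [] | S n => pick (picks pick n) :: picks pick n end.

Lemma in_picks {V : Type} (pick : list V -> V) m n :
  m < n -> In (pick (picks pick m)) (picks pick n).
Proof.
  induction n as [| n IH]; intro Hmn; [lia |]; simpl.
  destruct (Nat.eq_dec m n) as [-> | Hne]; [left; reflexivity | right; apply IH; lia].
Qed.

Lemma not_infinite_finite_set {V : Type} (P : V -> Prop) : ~ card_le nat {x | P x} -> finite_set P.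
Proof.
  intro Hfin; apply NNPP; intro Hinf.
  assert (Hnew : forall l, exists x, P x /\ ~ In x l).
  { intro l; apply NNPP; intro Hn; apply Hinf; exists l; intros x Px.
    apply NNPP; intro Hx; apply Hn; exists x; auto. }
  destruct (choice _ Hnew) as [pick Hpick].
  apply Hfin; apply (card_le_into_sig P (fun n => pick (picks pick n))); [| intro n; apply Hpick].
  intros m n E.
  destruct (Nat.lt_total m n) as [Hmn | [Hmn | Hmn]]; [exfalso | exact Hmn | exfalso].
  - apply (proj2 (Hpick (picks pick n))); rewrite <- E; apply in_picks, Hmn.
  - apply (proj2 (Hpick (picks pick m))); rewrite E; apply in_picks, Hmn.
Qed.

Definition smaller {V : Type} (P : V -> Prop) (K : Type) : Prop := ~ card_le K {x | P x}.

Lemma smaller_included {V : Type} (K : Type) (P Q : V -> Prop) :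
  included P Q -> smaller Q K -> smaller P K.
Proof.
  intros PQ HQ [g g_inj]; apply HQ.
  exists (fun k => exist Q (proj1_sig (g k)) (PQ _ (proj2_sig (g k)))).
  intros k k' E; apply g_inj, sig_eq; exact (f_equal (@proj1_sig _ _) E).
Qed.

Lemma smaller_of_finite {V : Type} (K : Type) (P : V -> Prop) :
  infinite_card K -> finite_set P -> smaller P K.
Proof.
  intros HK HP HPK; apply (finite_set_not_infinite P HP).
  exact (card_le_trans _ _ _ HK HPK).
Qed.

Definition pair_union {I V : Type} (A : I -> Prop) (F : I -> I -> list V) : V -> Prop :=
  fun x => exists i j, A i /\ A j /\ In x (F i j).

Lemma finite_pair_union {I V : Type} (A : I -> Prop) (F : I -> I -> list V) :
  finite_set A -> finite_set (pair_union A F).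
Proof.
  intros [l Hl]; exists (flat_map (fun i => flat_map (F i) l) l).
  intros x [i [j [Ai [Aj Hx]]]].
  apply in_flat_map; exists i; split; [auto |].
  apply in_flat_map; exists j; auto.
Qed.

Lemma card_le_pair_union {I V : Type} (A : I -> Prop) (F : I -> I -> list V) :
  card_le {x | pair_union A F x} ({i | A i} * {i | A i} * nat).
Proof.
  assert (Hpos : forall u : {x | pair_union A F x}, exists t : {i | A i} * {i | A i} * nat,
             nth_error (F (proj1_sig (fst (fst t))) (proj1_sig (snd (fst t)))) (snd t)
             = Some (proj1_sig u)).
  { intros [x [i [j [Ai [Aj Hx]]]]].
    destruct (In_nth_error _ _ Hx) as [n Hn].
    exists (exist A i Ai, exist A j Aj, n); exact Hn. }
  destruct (choice _ Hpos) as [pos Hpos'].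
  exists pos; intros u u' E; apply sig_eq.
  assert (Hu := Hpos' u); rewrite E, Hpos' in Hu; injection Hu; auto.
Qed.

Lemma smaller_pair_union {I V : Type} (K : Type) (A : I -> Prop) (F : I -> I -> list V) :
  infinite_card K -> smaller A K -> smaller (pair_union A F) K.
Proof.
  intros HK HA.
  destruct (classic (card_le nat {i | A i})) as [Ainf | Afin].
  - intro HU; apply HA.
    assert (Hsq := card_square_le _ Ainf).
    apply (card_le_trans _ _ _ HU), (card_le_trans _ _ _ (card_le_pair_union A F)).
    apply (card_le_trans _ ({i | A i} * {i | A i})); [| exact Hsq].
    exact (card_le_prod _ _ _ _ Hsq Ainf).
  - exact (smaller_of_finite K _ HK (finite_pair_union A F (not_infinite_finite_set A Afin))).
Qed.

(** * Paths *)

Lemma list_ends {V : Type} (l : list V) :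
  l = [] \/ (exists x, l = [x]) \/ exists x t y, l = x :: t ++ [y].
Proof.
  destruct l as [| x t]; [left; reflexivity | right].
  destruct t as [| u t]; [left; exists x; reflexivity | right].
  destruct (exists_last (l := u :: t) ltac:(discriminate)) as [t' [y ->]].
  exists x, t', y; reflexivity.
Qed.

Lemma interior_ends {V : Type} (x y : V) t : interior (x :: t ++ [y]) = t.
Proof. apply removelast_last. Qed.

Lemma in_interior {V : Type} (l : list V) z : In z (interior l) -> In z l.
Proof.
  destruct (list_ends l) as [-> | [[x ->] | [x [t [y ->]]]]]; simpl; try tauto.
  rewrite interior_ends; intro Hz; right; apply in_or_app; left; exact Hz.
Qed.

Lemma in_interior_rev {V : Type} (l : list V) z : In z (interior (rev l)) <-> In z (interior l).
Proof.
  destruct (list_ends l) as [-> | [[x ->] | [x [t [y ->]]]]]; simpl; try tauto.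
  rewrite rev_app_distr; simpl.
  rewrite !interior_ends, <- in_rev; tauto.
Qed.

Lemma path_shape {V : Type} (e : V -> V -> Prop) l x y :
  is_path e l x y -> l = [x] /\ x = y \/ exists t, l = x :: t ++ [y].
Proof.
  intros [[t ->] [Hlast _]].
  destruct t as [| u t]; [left; split; [reflexivity | exact Hlast] | right].
  destruct (exists_last (l := u :: t) ltac:(discriminate)) as [t' [a E]]; rewrite E in *.
  exists t'; rewrite app_comm_cons, last_last in Hlast; rewrite Hlast; reflexivity.
Qed.

Lemma interior_not_end {V : Type} (e : V -> V -> Prop) l x y z :
  is_path e l x y -> In z (interior l) -> z <> x /\ z <> y.
Proof.
  intros Hp Hz; destruct (path_shape e l x y Hp) as [[-> _] | [t ->]]; [contradiction |].
  rewrite interior_ends in Hz; destruct Hp as [_ [_ [_ Hnd]]].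
  apply NoDup_cons_iff in Hnd as [Hx Hnd].
  split; intros ->.
  - apply Hx, in_or_app; left; exact Hz.
  - apply (NoDup_remove_2 t [] y Hnd); rewrite app_nil_r; exact Hz.
Qed.

Lemma walk_snoc {V : Type} (e : V -> V -> Prop) l a :
  walk e l -> (l = [] \/ e (last l a) a) -> walk e (l ++ [a]).
Proof.
  induction l as [| x l IH]; simpl; auto.
  intros Hw [Hl | Hl]; [discriminate |].
  destruct l as [| y l]; simpl in *; [auto |].
  destruct Hw as [Hxy Hw]; split; [exact Hxy | apply IH; auto].
Qed.

Lemma walk_rev {V : Type} (e : V -> V -> Prop) l :
  (forall x y, e x y -> e y x) -> walk e l -> walk e (rev l).
Proof.
  intro e_sym; induction l as [| x l IH]; simpl; auto.
  intro Hw; apply walk_snoc.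
  - apply IH; destruct l; simpl in *; tauto.
  - destruct l as [| y l]; [left; reflexivity | right].
    simpl; rewrite last_last; apply e_sym; simpl in Hw; tauto.
Qed.

Lemma is_path_rev {V : Type} (e : V -> V -> Prop) l x y :
  (forall x y, e x y -> e y x) -> is_path e l x y -> is_path e (rev l) y x.
Proof.
  intros e_sym Hp; destruct (path_shape e l x y Hp) as [[-> <-] | [t ->]]; [exact Hp |].
  destruct Hp as [_ [_ [Hw Hnd]]].
  assert (Hrev : rev (x :: t ++ [y]) = y :: rev t ++ [x])
    by (simpl; rewrite rev_app_distr; reflexivity).
  split; [| split; [| split]].
  - exists (rev t ++ [x]); exact Hrev.
  - rewrite Hrev, app_comm_cons, last_last; reflexivity.
  - apply walk_rev; assumption.
  - apply NoDup_rev; assumption.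
Qed.

(** * Fans and subdivisions in kappa-connected graphs *)

Section Subdivision.
Variables (K : Type) (G : graph).
Hypothesis K_inf : infinite_card K.
Hypothesis G_conn : k_connected G K.

Lemma connected_minus_smaller (Z : G -> Prop) : smaller Z K -> connected_minus G Z.
Proof. intro HZ; apply G_conn, card_lt_of_not_ge, HZ. Qed.

Lemma graph_inhabited : inhabited G.
Proof.
  destruct (connected_minus_smaller (fun _ => False)) as [[v _] _]; [| exact (inhabits v)].
  apply smaller_of_finite; [exact K_inf | exists []; intros x []].
Qed.

Section Fan.
Variables (A : K -> Prop) (F : K -> K -> list G) (t : K -> G) (v : G).
Hypothesis A_small : smaller A K.

Record partial_fan (S : K * list G -> Prop) : Prop := {
  fan_fun : forall i l l', S (i, l) -> S (i, l') -> l = l';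
  fan_path : forall i l, S (i, l) ->
    A i /\ is_path (adj G) l v (t i) /\ forall x, In x (interior l) -> ~ pair_union A F x;
  fan_disjoint : forall i j l l', S (i, l) -> S (j, l') -> i <> j ->
    forall x, In x (interior l) -> ~ In x (interior l') }.

Lemma partial_fan_chain_closed : chain_closed partial_fan.
Proof.
  intros Fs Fch FP; split.
  - intros i l l' H H'.
    destruct (chain_union_common Fs _ _ Fch H H') as [S [FS [S1 S2]]].
    exact (fan_fun _ (FP S FS) _ _ _ S1 S2).
  - intros i l [S [FS Sl]]; exact (fan_path _ (FP S FS) _ _ Sl).
  - intros i j l l' H H'.
    destruct (chain_union_common Fs _ _ Fch H H') as [S [FS [S1 S2]]].
    exact (fan_disjoint _ (FP S FS) _ _ _ _ S1 S2).
Qed.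

Section MaximalFan.
Variable M : K * list G -> Prop.
Hypothesis M_max : maximal partial_fan M.
Variable Q : K -> list G.
Hypothesis Q_spec : forall i l, M (i, l) -> Q i = l.

Definition fan_used : G -> Prop := pair_union A (fun i j => F i j ++ Q i).

Lemma fan_used_forbidden x : pair_union A F x -> fan_used x.
Proof. intros [i [j [Ai [Aj Hx]]]]; exists i, j; split; [| split]; auto using in_or_app. Qed.

Lemma fan_used_path i l x : M (i, l) -> In x l -> fan_used x.
Proof.
  intros Hl Hx; destruct (fan_path _ (proj1 M_max) _ _ Hl) as [Ai _].
  exists i, i; split; [| split]; auto.
  rewrite (Q_spec _ _ Hl); auto using in_or_app.
Qed.

Lemma maximal_fan_complete i0 : A i0 -> exists l, M (i0, l).
Proof.
  intros Ai0; apply NNPP; intro Hno.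
  set (R := fun x => fan_used x /\ x <> v /\ x <> t i0).
  assert (R_small : smaller R K).
  { apply (smaller_included K R fan_used); [intros x [Hx _]; exact Hx |].
    apply smaller_pair_union; assumption. }
  destruct (connected_minus_smaller R R_small) as [_ Hconn].
  destruct (Hconn v (t i0)) as [l [Hl l_avoids]]; [intros [_ [H _]]; auto | intros [_ [_ H]]; auto |].
  assert (Hint : forall x, In x (interior l) -> ~ fan_used x).
  { intros x Hx Hu; destruct (interior_not_end _ _ _ _ _ Hl Hx).
    apply (l_avoids x (in_interior _ _ Hx)); split; auto. }
  apply Hno; exists l.
  apply (maximal_union _ _ (fun p => p = (i0, l)) M_max); [| reflexivity].
  split.
  - intros i l1 l2 [H1 | H1] [H2 | H2].
    + exact (fan_fun _ (proj1 M_max) _ _ _ H1 H2).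
    + injection H2 as -> ->; exfalso; eauto.
    + injection H1 as -> ->; exfalso; eauto.
    + congruence.
  - intros i l1 [H1 | H1]; [exact (fan_path _ (proj1 M_max) _ _ H1) |].
    injection H1 as -> ->; split; [| split]; auto.
    intros x Hx Hf; exact (Hint x Hx (fan_used_forbidden x Hf)).
  - intros i j l1 l2 [H1 | H1] [H2 | H2] Hij x Hx1 Hx2.
    + exact (fan_disjoint _ (proj1 M_max) _ _ _ _ H1 H2 Hij x Hx1 Hx2).
    + injection H2 as -> ->; exact (Hint x Hx2 (fan_used_path _ _ _ H1 (in_interior _ _ Hx1))).
    + injection H1 as -> ->; exact (Hint x Hx1 (fan_used_path _ _ _ H2 (in_interior _ _ Hx2))).
    + congruence.
Qed.

End MaximalFan.

Lemma fan : exists Q : K -> list G,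
  (forall i, A i -> is_path (adj G) (Q i) v (t i) /\
                    forall x, In x (interior (Q i)) -> ~ pair_union A F x) /\
  (forall i j, A i -> A j -> i <> j ->
     forall x, In x (interior (Q i)) -> ~ In x (interior (Q j))).
Proof.
  destruct (zorn partial_fan partial_fan_chain_closed) as [M M_max].
  destruct (partial_fun_choice (fun i l => M (i, l)) (inhabits []) (fan_fun _ (proj1 M_max)))
    as [Q Q_spec].
  assert (Q_in : forall i, A i -> M (i, Q i)).
  { intros i Ai; destruct (maximal_fan_complete M M_max Q Q_spec i Ai) as [l Hl].
    rewrite (Q_spec _ _ Hl); exact Hl. }
  exists Q; split.
  - intros i Ai; exact (proj2 (fan_path _ (proj1 M_max) _ _ (Q_in i Ai))).
  - intros i j Ai Aj; exact (fan_disjoint _ (proj1 M_max) _ _ _ _ (Q_in i Ai) (Q_in j Aj)).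
Qed.

End Fan.

(* [inl (k, w)]: the branch vertex of [k] is [w];
   [inr (i, j, l)]: [l] is the path joining the branch vertices of [i] and [j]. *)
Definition fact : Type := ((K * G) + (K * K * list G))%type.

Record partial_subdivision (S : fact -> Prop) : Prop := {
  branch_bij : forall p q, S (inl p) -> S (inl q) -> partial_bij p q;
  path_fun : forall i j l l', S (inr (i, j, l)) -> S (inr (i, j, l')) -> l = l';
  path_ends : forall i j l, S (inr (i, j, l)) -> i <> j /\
    exists vi vj, S (inl (i, vi)) /\ S (inl (j, vj)) /\ is_path (adj G) l vi vj;
  path_avoids_branch : forall i j l k w, S (inr (i, j, l)) -> S (inl (k, w)) ->
    ~ In w (interior l);
  paths_disjoint : forall i j l k m l', S (inr (i, j, l)) -> S (inr (k, m, l')) ->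
    ~ ((i = k /\ j = m) \/ (i = m /\ j = k)) ->
    forall x, In x (interior l) -> ~ In x (interior l');
  paths_complete : forall i j vi vj, S (inl (i, vi)) -> S (inl (j, vj)) -> i <> j ->
    exists l, S (inr (i, j, l)) }.

Lemma partial_subdivision_chain_closed : chain_closed partial_subdivision.
Proof.
  intros Fs Fch FP; split.
  - intros p q Hp Hq.
    destruct (chain_union_common Fs _ _ Fch Hp Hq) as [S [FS [S1 S2]]].
    exact (branch_bij _ (FP S FS) _ _ S1 S2).
  - intros i j l l' H H'.
    destruct (chain_union_common Fs _ _ Fch H H') as [S [FS [S1 S2]]].
    exact (path_fun _ (FP S FS) _ _ _ _ S1 S2).
  - intros i j l [S [FS Sl]].
    destruct (path_ends _ (FP S FS) _ _ _ Sl) as [Hij [vi [vj [Hi [Hj Hp]]]]].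
    split; [exact Hij |].
    exists vi, vj; split; [exists S; auto | split; [exists S; auto | exact Hp]].
  - intros i j l k w H H'.
    destruct (chain_union_common Fs _ _ Fch H H') as [S [FS [S1 S2]]].
    exact (path_avoids_branch _ (FP S FS) _ _ _ _ _ S1 S2).
  - intros i j l k m l' H H'.
    destruct (chain_union_common Fs _ _ Fch H H') as [S [FS [S1 S2]]].
    exact (paths_disjoint _ (FP S FS) _ _ _ _ _ _ S1 S2).
  - intros i j vi vj H H' Hij.
    destruct (chain_union_common Fs _ _ Fch H H') as [S [FS [S1 S2]]].
    destruct (paths_complete _ (FP S FS) _ _ _ _ S1 S2 Hij) as [l Hl].
    exists l, S; auto.
Qed.

Section MaximalSubdivision.
Variable M : fact -> Prop.
Hypothesis M_max : maximal partial_subdivision M.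
Variables (branch : K -> G) (path : K -> K -> list G).
Hypothesis branch_spec : forall k w, M (inl (k, w)) -> branch k = w.
Hypothesis path_spec : forall i j l, M (inr (i, j, l)) -> path i j = l.

Let M_sub : partial_subdivision M := proj1 M_max.

Definition placed (k : K) : Prop := exists w, M (inl (k, w)).

(* This also contains the unspecified values [path i i], which is harmless: it
   only enlarges a set that must be avoided and is shown to be small. *)
Definition used : G -> Prop := pair_union placed (fun i j => branch i :: path i j).

Lemma placed_branch k : placed k -> M (inl (k, branch k)).
Proof. intros [w Hw]; rewrite (branch_spec _ _ Hw); exact Hw. Qed.

Lemma branch_inj i j : placed i -> placed j -> branch i = branch j -> i = j.
Proof.
  intros Hi Hj E.
  exact (proj2 (branch_bij _ M_sub _ _ (placed_branch i Hi) (placed_branch j Hj)) E).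
Qed.

Lemma M_path i j l : M (inr (i, j, l)) ->
  placed i /\ placed j /\ i <> j /\ path i j = l /\ is_path (adj G) l (branch i) (branch j).
Proof.
  intro Hl; destruct (path_ends _ M_sub _ _ _ Hl) as [Hij [vi [vj [Hi [Hj Hp]]]]].
  rewrite (branch_spec _ _ Hi), (branch_spec _ _ Hj), (path_spec _ _ _ Hl).
  split; [exists vi | split; [exists vj |]]; auto.
Qed.

Lemma used_branch k : placed k -> used (branch k).
Proof. intro Hk; exists k, k; simpl; auto. Qed.

Lemma used_path i j l x : M (inr (i, j, l)) -> In x l -> used x.
Proof.
  intros Hl Hx; destruct (M_path i j l Hl) as [Hi [Hj [_ [<- _]]]].
  exists i, j; simpl; auto.
Qed.

Section Extension.
Variables (a : K) (v : G) (Q : K -> list G).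
Hypothesis a_new : ~ placed a.
Hypothesis v_unused : ~ used v.
Hypothesis Q_path : forall c, placed c ->
  is_path (adj G) (Q c) v (branch c) /\ forall x, In x (interior (Q c)) -> ~ used x.
Hypothesis Q_disjoint : forall c c', placed c -> placed c' -> c <> c' ->
  forall x, In x (interior (Q c)) -> ~ In x (interior (Q c')).

Definition new_fact (f : fact) : Prop :=
  match f with
  | inl (k, w) => k = a /\ w = v
  | inr (i, j, l) => (i = a /\ placed j /\ l = Q j) \/ (j = a /\ placed i /\ l = rev (Q i))
  end.

Definition extended (f : fact) : Prop := M f \/ new_fact f.

Lemma new_path_shape i j l : new_fact (inr (i, j, l)) ->
  exists c, placed c /\ ((i = a /\ j = c) \/ (i = c /\ j = a)) /\
            forall x, In x (interior l) <-> In x (interior (Q c)).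
Proof.
  intros [[-> [Hj ->]] | [-> [Hi ->]]]; [exists j | exists i]; split; auto.
  - split; [left; auto | tauto].
  - split; [right; auto | apply in_interior_rev].
Qed.

Lemma new_path_unused i j l x : new_fact (inr (i, j, l)) -> In x (interior l) -> ~ used x.
Proof.
  intros Hl Hx; destruct (new_path_shape i j l Hl) as [c [Hc [_ Hint]]].
  apply (Q_path c Hc), Hint, Hx.
Qed.

Lemma extended_branch_bij p q : extended (inl p) -> extended (inl q) -> partial_bij p q.
Proof.
  assert (Hmix : forall p q, M (inl p) -> new_fact (inl q) -> partial_bij p q).
  { intros [k w] [k' w'] Hp [-> ->]; unfold partial_bij; simpl.
    assert (Hk : placed k) by (exists w; exact Hp).
    rewrite <- (branch_spec _ _ Hp).
    split; intro E; exfalso; [rewrite E in Hk | rewrite <- E in v_unused]; auto using used_branch. }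
  intros [Hp | Hp] [Hq | Hq].
  - exact (branch_bij _ M_sub _ _ Hp Hq).
  - exact (Hmix p q Hp Hq).
  - exact (partial_bij_sym _ _ (Hmix q p Hq Hp)).
  - destruct p, q, Hp as [-> ->], Hq as [-> ->]; unfold partial_bij; tauto.
Qed.

Lemma extended_path_fun i j l l' :
  extended (inr (i, j, l)) -> extended (inr (i, j, l')) -> l = l'.
Proof.
  assert (Hmix : forall l l', M (inr (i, j, l)) -> ~ new_fact (inr (i, j, l'))).
  { intros l1 l2 H1 [[-> _] | [-> _]]; apply a_new; apply (M_path _ _ _ H1). }
  intros [H1 | H1] [H2 | H2].
  - exact (path_fun _ M_sub _ _ _ _ H1 H2).
  - exfalso; exact (Hmix _ _ H1 H2).
  - exfalso; exact (Hmix _ _ H2 H1).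
  - destruct H1 as [[-> [Hj ->]] | [-> [Hi ->]]], H2 as [[E [Hj' ->]] | [E [Hi' ->]]];
      subst; auto; contradiction.
Qed.

Lemma extended_path_ends i j l : extended (inr (i, j, l)) -> i <> j /\
  exists vi vj, extended (inl (i, vi)) /\ extended (inl (j, vj)) /\ is_path (adj G) l vi vj.
Proof.
  intros [Hl | [[-> [Hj ->]] | [-> [Hi ->]]]].
  - destruct (path_ends _ M_sub _ _ _ Hl) as [Hij [vi [vj [Hi [Hj Hp]]]]].
    split; [exact Hij | exists vi, vj; split; [left | split; [left |]]; auto].
  - split; [intros ->; contradiction |].
    exists v, (branch j); split; [right; split; reflexivity | split].
    + left; apply placed_branch, Hj.
    + apply (Q_path j Hj).
  - split; [intros ->; contradiction |].
    exists (branch i), v; split; [left; apply placed_branch, Hi | split].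
    + right; split; reflexivity.
    + apply is_path_rev; [apply adj_sym | apply (Q_path i Hi)].
Qed.

Lemma extended_path_avoids_branch i j l k w :
  extended (inr (i, j, l)) -> extended (inl (k, w)) -> ~ In w (interior l).
Proof.
  intros [Hl | Hl] [Hw | [-> ->]] Hin.
  - exact (path_avoids_branch _ M_sub _ _ _ _ _ Hl Hw Hin).
  - exact (v_unused (used_path _ _ _ _ Hl (in_interior _ _ Hin))).
  - apply (new_path_unused _ _ _ _ Hl Hin).
    rewrite <- (branch_spec _ _ Hw); apply used_branch; exists w; exact Hw.
  - destruct (new_path_shape i j l Hl) as [c [Hc [_ Hint]]].
    apply Hint in Hin.
    exact (proj1 (interior_not_end _ _ _ _ _ (proj1 (Q_path c Hc)) Hin) eq_refl).
Qed.

Lemma extended_paths_disjoint i j l k m l' :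
  extended (inr (i, j, l)) -> extended (inr (k, m, l')) ->
  ~ ((i = k /\ j = m) \/ (i = m /\ j = k)) ->
  forall x, In x (interior l) -> ~ In x (interior l').
Proof.
  intros [H1 | H1] [H2 | H2] Hpair x Hx1 Hx2.
  - exact (paths_disjoint _ M_sub _ _ _ _ _ _ H1 H2 Hpair x Hx1 Hx2).
  - exact (new_path_unused _ _ _ _ H2 Hx2 (used_path _ _ _ _ H1 (in_interior _ _ Hx1))).
  - exact (new_path_unused _ _ _ _ H1 Hx1 (used_path _ _ _ _ H2 (in_interior _ _ Hx2))).
  - destruct (new_path_shape _ _ _ H1) as [c1 [Hc1 [Hp1 Hint1]]].
    destruct (new_path_shape _ _ _ H2) as [c2 [Hc2 [Hp2 Hint2]]].
    apply Hint1 in Hx1; apply Hint2 in Hx2.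
    destruct (classic (c1 = c2)) as [<- | Hc12].
    + apply Hpair.
      destruct Hp1 as [[-> ->] | [-> ->]], Hp2 as [[-> ->] | [-> ->]]; tauto.
    + exact (Q_disjoint c1 c2 Hc1 Hc2 Hc12 x Hx1 Hx2).
Qed.

Lemma extended_paths_complete i j vi vj :
  extended (inl (i, vi)) -> extended (inl (j, vj)) -> i <> j ->
  exists l, extended (inr (i, j, l)).
Proof.
  intros [Hi | [-> ->]] [Hj | [-> ->]] Hij.
  - destruct (paths_complete _ M_sub _ _ _ _ Hi Hj Hij) as [l Hl]; exists l; left; exact Hl.
  - exists (rev (Q i)); right; right; split; [reflexivity | split; [exists vi; exact Hi | reflexivity]].
  - exists (Q j); right; left; split; [reflexivity | split; [exists vj; exact Hj | reflexivity]].
  - contradiction.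
Qed.

Lemma extended_subdivision : partial_subdivision extended.
Proof.
  split.
  - exact extended_branch_bij.
  - exact extended_path_fun.
  - exact extended_path_ends.
  - exact extended_path_avoids_branch.
  - exact extended_paths_disjoint.
  - exact extended_paths_complete.
Qed.

End Extension.

Lemma maximal_subdivision_placed : card_le K {k | placed k}.
Proof.
  apply NNPP; intro placed_small.
  assert (Ha : exists a, ~ placed a).
  { apply NNPP; intro Hall; apply placed_small.
    apply (card_le_into_sig placed (fun k => k)); [intros x y E; exact E |].
    intro k; apply NNPP; intro Hk; apply Hall; exists k; exact Hk. }
  destruct Ha as [a a_new].
  assert (used_small : smaller used K) by (apply smaller_pair_union; assumption).
  destruct (connected_minus_smaller used used_small) as [[v v_unused] _].
  destruct (fan placed (fun i j => branch i :: path i j) branch v placed_small) as [Q [Q_path Q_disjoint]].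
  apply a_new; exists v.
  apply (maximal_union _ _ _ M_max (extended_subdivision a v Q a_new v_unused Q_path Q_disjoint)).
  split; reflexivity.
Qed.

Lemma maximal_subdivision_TK : has_TK G K.
Proof.
  destruct maximal_subdivision_placed as [h h_inj].
  set (p := fun i => proj1_sig (h i)).
  assert (p_inj : forall i j, p i = p j -> i = j) by (intros i j E; apply h_inj, sig_eq, E).
  assert (p_placed : forall i, placed (p i)) by (intro i; exact (proj2_sig (h i))).
  assert (Hpath : forall i j, i <> j -> M (inr (p i, p j, path (p i) (p j)))).
  { intros i j Hij.
    destruct (paths_complete _ M_sub _ _ _ _ (placed_branch _ (p_placed i))
                (placed_branch _ (p_placed j)) (fun E => Hij (p_inj _ _ E))) as [l Hl].
    rewrite (path_spec _ _ _ Hl); exact Hl. }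
  exists (fun i => branch (p i)), (fun i j => path (p i) (p j)).
  split; [| split].
  - intros i j E; exact (p_inj _ _ (branch_inj _ _ (p_placed i) (p_placed j) E)).
  - intros i j Hij; split.
    + exact (proj2 (proj2 (proj2 (proj2 (M_path _ _ _ (Hpath i j Hij)))))).
    + intro k; exact (path_avoids_branch _ M_sub _ _ _ _ _ (Hpath i j Hij) (placed_branch _ (p_placed k))).
  - intros i j k m Hij Hkm Hpair.
    apply (paths_disjoint _ M_sub _ _ _ _ _ _ (Hpath i j Hij) (Hpath k m Hkm)).
    intros [[E1 E2] | [E1 E2]]; apply Hpair; [left | right]; split; apply p_inj; assumption.
Qed.

End MaximalSubdivision.

End Subdivision.

Theorem mainTheorem6 (K : Type) (G : graph) :
  infinite_card K -> k_connected G K -> has_TK G K.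
Proof.
  intros K_inf G_conn.
  destruct (zorn _ (partial_subdivision_chain_closed K G)) as [M M_max].
  destruct (graph_inhabited K G K_inf G_conn) as [g0].
  destruct (partial_fun_choice (fun k w => M (inl (k, w))) (inhabits g0)) as [branch branch_spec].
  { intros k w w' H H'; exact (proj1 (branch_bij _ _ _ (proj1 M_max) _ _ H H') eq_refl). }
  destruct (partial_fun_choice (fun ij l => M (inr (ij, l))) (inhabits [])) as [path path_spec].
  { intros [i j]; exact (path_fun _ _ _ (proj1 M_max) i j). }
  exact (maximal_subdivision_TK K G K_inf G_conn M M_max branch (fun i j => path (i, j))
           branch_spec (fun i j => path_spec (i, j))).
Qed.
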